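(* If $\succ=(\succ_s)_{s\in S}$ is a priority profile in which every $\succ_s$ is acyclic, then the set $f^\succ$ of student optimal stable matchings for $\succ$ is nonempty (in particular the set $\mathcal{S}^\succ$ of stable matchings for $\succ$ is nonempty).
   Context: A binary relation $B$ on $X$ is asymmetric if $(x,y)\in B$ implies $(y,x)\notin B$; acyclic if for all $K\ge2$ and $x_0,\dots,x_K\in X$, [$(x_{k-1},x_k)\in B$ and $(x_k,x_{k-1})\notin B$ for all $k$] implies $(x_K,x_0)\notin B$. School choice setup: $I$ is a finite set of students with $|I|\ge 3$, $S$ a finite set of schools. Each student $i$ has a total order $P_i$ on $S\cup\{\emptyset\}$; $sR_is'$ means $sP_is'$ or $s=s'$. Each school $s$ has capacity $q_s\in\mathbb{Z}_{++}$ and an asymmetric priority relation $\succ_s$ on $I$. A matching $\mu$ assigns each $i$ to $\mu(i)\in S\cup\{\emptyset\}$, $\mu(s)=\{i:\mu(i)=s\}$, $|\mu(s)|\le q_s$. $\mu$ is stable for $\succ$ if it is individually rational ($\mu(i)R_i\emptyset$ for all $i$), non-wasteful ($sP_i\mu(i)$ implies $|\mu(s)|=q_s$) and fair (no $s$, $j\in\mu(s)$, $i\notin\mu(s)$ with $sR_i\mu(i)$ and $(i,j)\in\succ_s$). $\mu$ is Pareto dominated by $\mu'$ if $\mu'(i)R_i\mu(i)$ for all $i$ and $\mu'(i)P_i\mu(i)$ for some $i$. A student optimal stable matching (SOSM) for $\succ$ is a stable matching for $\succ$ not Pareto dominated by any stable matching for $\succ$; $\mathcal{S}^\succ$ and $f^\succ\subseteq\mathcal{S}^\succ$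 denote the sets of stable matchings and SOSMs for $\succ$. *)

(* Students I and schools S are finite types; the null
   school (being unassigned) is represented by [None : option S]. *)
From mathcomp Require Import all_boot.
Set Implicit Arguments. Unset Strict Implicit. Unset Printing Implicit Defensive.

Section SchoolChoice.
Variables (I S : finType).

Definition asymmetric (X : Type) (B : rel X) : Prop :=
  forall x y, B x y -> ~~ B y x.

Definition acyclic (X : Type) (B : rel X) : Prop :=
  forall (K : nat) (x : nat -> X), 2 <= K ->
    (forall k, 1 <= k <= K -> B (x k.-1) (x k) && ~~ B (x k) (x k.-1)) ->
    ~~ B (x K) (x 0).

Definition strict_total_order (X : eqType) (P : rel X) : Prop :=
  [/\ irreflexive P, transitive P & forall a b, a != b -> P a b || P b a].

Definition weak (X : eqType) (P : rel X) : rel X := fun a b => P a b || (a == b).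

Definition assigned (mu : I -> option S) (s : S) : {set I} :=
  [set i | mu i == Some s].

Definition is_matching (q : S -> nat) (mu : I -> option S) : Prop :=
  forall s, #|assigned mu s| <= q s.

Definition individually_rational (P : I -> rel (option S)) (mu : I -> option S) :=
  forall i, weak (P i) (mu i) None.

Definition non_wasteful (P : I -> rel (option S)) (q : S -> nat) (mu : I -> option S) :=
  forall i s, P i (Some s) (mu i) -> #|assigned mu s| = q s.

Definition fair (P : I -> rel (option S)) (pr : S -> rel I) (mu : I -> option S) :=
  ~ (exists s i j, [/\ j \in assigned mu s, i \notin assigned mu s,
                       weak (P i) (Some s) (mu i) & pr s i j]).

Definition stable (P : I -> rel (option S)) (q : S -> nat) (pr : S -> rel I)
  (mu : I -> option S) : Prop :=
  [/\ is_matching q mu, individually_rational P mu, non_wasteful P q mu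
    & fair P pr mu].

Definition pareto_dominated (P : I -> rel (option S)) (mu mu' : I -> option S) :=
  (forall i, weak (P i) (mu' i) (mu i)) /\ (exists i, P i (mu' i) (mu i)).

Definition SOSM (P : I -> rel (option S)) (q : S -> nat) (pr : S -> rel I)
  (mu : I -> option S) : Prop :=
  stable P q pr mu /\
  ~ (exists mu', stable P q pr mu' /\ pareto_dominated P mu mu').

End SchoolChoice.

From mathcomp Require Import all_boot.
From mathcomp Require Import zify.
From Stdlib Require Import Classical.
Set Implicit Arguments. Unset Strict Implicit. Unset Printing Implicit Defensive.

(* Consider the class of "fair matchings": capacity-respecting, individually
   rational and fair, but possibly wasteful.  It contains the empty matching,
   and every stable matching belongs to it.  Since the number of options each
   student ranks below her assignment strictly increases along Pareto
   improvements and is bounded, this class has a Pareto-undominated member mu.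
   The key step shows that mu wastes no seat: if a student wants a school s
   with a free seat, pick among the students who want s one that nobody else
   wanting s outranks at s (such a maximal student exists because the priority
   at s is asymmetric and acyclic on a finite set); moving her to s is a Pareto
   improvement that stays fair, a contradiction.  So mu is stable, and as it is
   undominated even among fair matchings, it is a student optimal stable one. *)

Lemma asymmetric_irrefl (X : Type) (B : rel X) :
  asymmetric B -> forall x, ~~ B x x.
Proof. by move=> asB x; apply/negP => Bxx; move: (asB x x Bxx); rewrite Bxx. Qed.

Lemma seq_repeats (T : finType) (x : nat -> T) :
  exists a b, a < b /\ x a = x b.
Proof.
pose g (i : 'I_#|T|.+1) := x i.
have /injectivePn [a [b neq_ab eq_gab]] : ~~ injectiveb g.
  by apply/negP => /injectiveP /leq_card; rewrite card_ord ltnn.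
case: (ltngtP a b) => [lt_ab|lt_ba|/val_inj eq_ab]; first by exists a, b.
  by exists b, a.
by rewrite eq_ab eqxx in neq_ab.
Qed.

(* An asymmetric acyclic relation admits no closed chain x_a B^-1 ... B^-1 x_b
   with x_a = x_b: chains of length 1, 2 and >= 3 are excluded respectively by
   irreflexivity, asymmetry and acyclicity. *)
Lemma acyclic_no_closed_chain (X : Type) (B : rel X) (x : nat -> X) (a b : nat) :
  asymmetric B -> acyclic B -> a < b -> x a = x b ->
  ~ (forall n, B (x n.+1) (x n)).
Proof.
move=> asB acB lt_ab eq_x chain.
have : b = a.+1 \/ b = a.+2 \/ a.+3 <= b by lia.
case=> [b1|[b2|long]].
- by move: (asymmetric_irrefl asB (x a)); rewrite {1}eq_x b1 chain.
- by move: (asB _ _ (chain a)); rewrite eq_x b2 chain.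
- apply: (negP (acB (b - a.+1) (fun k => x (b - k)) _ _)); first lia.
  + move=> k /andP[k_ge1 k_le] /=.
    have -> : b - k.-1 = (b - k).+1 by lia.
    by rewrite chain (asB _ _ (chain _)).
  + have -> : b - (b - a.+1) = a.+1 by lia.
    by rewrite subn0 -eq_x chain.
Qed.

(* Every nonempty finite set has a B-maximal element when B is asymmetric and
   acyclic: otherwise iterating "pick a B-better element" never stops, and the
   resulting chain repeats a value by pigeonhole. *)
Lemma acyclic_maximal (T : finType) (B : rel T) (W : {set T}) (x0 : T) :
  asymmetric B -> acyclic B -> x0 \in W ->
  exists2 j, j \in W & forall k, k \in W -> ~~ B k j.
Proof.
move=> asB acB x0W.
case: (pickP [pred j in W | [forall (k | k \in W), ~~ B k j]]) => [j /andP[jW /forall_inP]|none].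
  by exists j.
have better j : j \in W -> exists2 k, k \in W & B k j.
  move=> jW; move: (none j); rewrite /= jW /= => /negbT; rewrite negb_forall_in.
  by case/exists_inP => k kW; rewrite negbK; exists k.
pose f j := odflt j [pick k in W | B k j].
have fP j : j \in W -> f j \in W /\ B (f j) j.
  move=> jW; rewrite /f; case: pickP => [k /andP[] //|no_k].
  by have [k kW Bkj] := better j jW; move: (no_k k); rewrite /= kW Bkj.
pose x n := iter n f x0.
have xW n : x n \in W by elim: n => [|n IH] //=; case: (fP _ IH).
have [a [b [lt_ab eq_x]]] := seq_repeats x.
exfalso; apply: (acyclic_no_closed_chain asB acB lt_ab eq_x) => n.
by case: (fP _ (xW n)).
Qed.

(* Options strictly below [x] for the preference [R]; it grows strictly as [x]
   strictly improves, which makes its size a potential for Pareto improvement. *)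
Definition below (X : finType) (R : rel X) (x : X) : {set X} := [set z | R x z].

Lemma below_weak_subset (X : finType) (R : rel X) (x y : X) :
  transitive R -> weak R x y -> below R y \subset below R x.
Proof.
move=> trR /orP[Rxy|/eqP->]; last exact: subxx.
by apply/subsetP => z; rewrite !inE; exact: trR.
Qed.

Lemma below_proper (X : finType) (R : rel X) (x y : X) :
  irreflexive R -> transitive R -> R x y -> below R y \proper below R x.
Proof.
move=> irrR trR Rxy; apply/properP; split.
  by apply: below_weak_subset => //; rewrite /weak Rxy.
by exists y; rewrite !inE ?irrR.
Qed.

Section SchoolChoiceProofs.
Variables (I S : finType) (P : I -> rel (option S)) (q : S -> nat) (pr : S -> rel I).
Hypothesis P_irr : forall i, irreflexive (P i).
Hypothesis P_trans : forall i, transitive (P i).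

Definition welfare (mu : I -> option S) : nat := \sum_(i : I) #|below (P i) (mu i)|.

Lemma welfare_bound (mu : I -> option S) : welfare mu <= #|I| * #|{: option S}|.
Proof.
by rewrite -sum_nat_const; apply: leq_sum => i _; exact: max_card.
Qed.

Lemma welfare_dominated (mu mu' : I -> option S) :
  pareto_dominated P mu mu' -> welfare mu < welfare mu'.
Proof.
move=> [weakly [i better_i]]; rewrite /welfare (bigD1 i) //= [X in _ < X](bigD1 i) //=.
rewrite -addSn; apply: leq_add; first exact/proper_card/below_proper.
by apply: leq_sum => k _; apply/subset_leq_card/below_weak_subset.
Qed.

(* Any nonempty class of matchings has a Pareto-undominated member: otherwise
   welfare could be increased indefinitely within the class. *)
Lemma exists_undominated (E : (I -> option S) -> Prop) (mu0 : I -> option S) :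
  E mu0 -> exists mu, E mu /\ ~ exists mu', E mu' /\ pareto_dominated P mu mu'.
Proof.
move=> E_mu0; apply: NNPP => all_dominated.
have climb n : exists mu, E mu /\ n <= welfare mu.
  elim: n => [|n [mu [E_mu le_n]]]; first by exists mu0.
  have [mu' [E_mu' dom]] : exists mu', E mu' /\ pareto_dominated P mu mu'.
    by apply: NNPP => undominated; apply: all_dominated; exists mu.
  by exists mu'; split=> //; apply: leq_ltn_trans le_n (welfare_dominated dom).
have [mu [_ too_big]] := climb (#|I| * #|{: option S}|).+1.
by move: (leq_trans too_big (welfare_bound mu)); rewrite ltnn.
Qed.

Definition fair_matching (mu : I -> option S) : Prop :=
  [/\ is_matching q mu, individually_rational P mu & fair P pr mu].

Lemma fair_matching_empty : fair_matching (fun _ => None).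
Proof.
split.
- by move=> s; rewrite (_ : assigned _ s = set0) ?cards0 //; apply/setP => i; rewrite !inE.
- by move=> i; rewrite /weak eqxx orbT.
- by move=> [s [i [j [j_in _ _ _]]]]; move: j_in; rewrite inE.
Qed.

Lemma stable_fair_matching (mu : I -> option S) : stable P q pr mu -> fair_matching mu.
Proof. by case. Qed.

Definition reassign (mu : I -> option S) (j : I) (s : S) : I -> option S :=
  fun k => if k == j then Some s else mu k.

Lemma reassign_matching (mu : I -> option S) (j : I) (s : S) :
  is_matching q mu -> #|assigned mu s| < q s -> is_matching q (reassign mu j s).
Proof.
move=> cap seat_s t; case: (eqVneq t s) => [->|neq_ts].
  apply: (@leq_trans #|j |: assigned mu s|).
    apply/subset_leq_card/subsetP => k; rewrite !inE /reassign.
    by case: (eqVneq k j) => [->|_]; rewrite ?eqxx ?orbT.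
  by move: seat_s; rewrite cardsU1; case: (_ \notin _); lia.
apply: leq_trans (cap t); apply/subset_leq_card/subsetP => k.
by rewrite !inE /reassign; case: (eqVneq k j) => // _ /eqP[eq_ts]; rewrite eq_ts eqxx in neq_ts.
Qed.

Lemma reassign_individually_rational (mu : I -> option S) (j : I) (s : S) :
  individually_rational P mu -> P j (Some s) (mu j) ->
  individually_rational P (reassign mu j s).
Proof.
move=> ir j_wants k; rewrite /reassign; case: (eqVneq k j) => [->|_]; last exact: ir.
case/orP: (ir j) => [acceptable|/eqP unassigned]; last by rewrite /weak -unassigned j_wants.
by rewrite /weak (P_trans j_wants acceptable).
Qed.

Lemma reassign_dominates (mu : I -> option S) (j : I) (s : S) :
  P j (Some s) (mu j) -> pareto_dominated P mu (reassign mu j s).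
Proof.
move=> j_wants; split; last by exists j; rewrite /reassign eqxx.
move=> k; rewrite /reassign /weak; case: (eqVneq k j) => [->|_]; first by rewrite j_wants.
by rewrite eqxx orbT.
Qed.

(* A justified envy in the new matching is either envy of [j] at some school
   she now likes better than [s], hence already justified before, or envy
   towards [j] at [s], excluded by the choice of [j]. *)
Lemma reassign_fair (mu : I -> option S) (j : I) (s : S) :
  fair P pr mu -> P j (Some s) (mu j) ->
  (forall k, P k (Some s) (mu k) -> ~~ pr s k j) ->
  fair P pr (reassign mu j s).
Proof.
move=> fa j_wants j_top [t [a [b [b_in a_out a_envies a_over_b]]]]; apply: fa.
move: b_in a_out a_envies; rewrite !inE /reassign.
case: (eqVneq a j) => [eq_aj|neq_aj].
  subst a => b_in neq_st /orP[j_prefers_t|/eqP eq_st]; last by rewrite eq_st eqxx in neq_st.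
  have j_prefers_t_old := P_trans j_prefers_t j_wants.
  have neq_bj : b != j by apply: contraNneq neq_st => eq_bj; move: b_in; rewrite eq_bj eqxx.
  move: b_in; rewrite (negbTE neq_bj) => b_in.
  exists t, j, b; split=> //; rewrite ?inE //; last by rewrite /weak j_prefers_t_old.
  by apply: contraTneq j_prefers_t_old => ->; rewrite P_irr.
case: (eqVneq b j) => [eq_bj|_ b_in a_out a_envies]; last by exists t, a, b; rewrite !inE.
subst b; case/eqP=> eq_st; subst t => a_out /orP[a_wants|/eqP a_at_s]; last by rewrite a_at_s eqxx in a_out.
by move: (j_top a a_wants); rewrite a_over_b.
Qed.

Hypothesis pr_asym : forall s, asymmetric (pr s).
Hypothesis pr_acyclic : forall s, acyclic (pr s).

(* If some student wants a school [s] with a free seat, move there a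
   priority-maximal student among those who want [s]; this Pareto-improves
   and stays fair. *)
Lemma undominated_fair_matching_stable (mu : I -> option S) :
  fair_matching mu ->
  ~ (exists mu', fair_matching mu' /\ pareto_dominated P mu mu') ->
  stable P q pr mu.
Proof.
case=> cap ir fa undominated; split=> // i s i_wants.
apply/eqP; apply: contraT => not_full.
have seat_s : #|assigned mu s| < q s by rewrite ltn_neqAle not_full cap.
have i_in : i \in [set k | P k (Some s) (mu k)] by rewrite inE.
have [j j_in j_top] := acyclic_maximal (@pr_asym s) (@pr_acyclic s) i_in.
rewrite inE in j_in.
case: undominated; exists (reassign mu j s); split; last exact: reassign_dominates.
split; first exact: reassign_matching.
  exact: reassign_individually_rational.
by apply: reassign_fair => // k k_wants; apply: j_top; rewrite inE.
Qed.

End SchoolChoiceProofs.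

Theorem corollary1 (I S : finType) (P : I -> rel (option S)) (q : S -> nat)
  (pr : S -> rel I) :
  3 <= #|I| ->
  (forall i, strict_total_order (P i)) ->
  (forall s, 0 < q s) ->
  (forall s, asymmetric (pr s)) ->
  (forall s, acyclic (pr s)) ->
  (exists mu : I -> option S, SOSM P q pr mu) /\
  (exists mu : I -> option S, stable P q pr mu).
Proof.
move=> _ P_order _ pr_asym pr_acyclic.
have P_irr i : irreflexive (P i) by case: (P_order i).
have P_trans i : transitive (P i) by case: (P_order i).
have [mu [fair_mu undominated]] :=
  exists_undominated P_irr P_trans (@fair_matching_empty I S P q pr).
have stable_mu := undominated_fair_matching_stable P_irr P_trans pr_asym pr_acyclic
  fair_mu undominated.
split; exists mu => //; split=> // [[mu' [stable_mu' dom]]].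
by apply: undominated; exists mu'; split=> //; exact: stable_fair_matching.
Qed.
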